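(* Consider a sequence of screening problems indexed by the number of alternatives $k$, with fixed $m$ and $\delta>0$, alternatives labeled so that $\mu_1\ge\dots\ge\mu_k$, and $\mathcal{G}=\{i:\mu_i\ge\mu_m-\delta\}$. Suppose $\limsup_{k\to\infty}|\mathcal{G}|<\infty$. Let a budget allocation algorithm satisfy the two randomization properties below. If the total evaluation budget $B$ satisfies $\lim_{k\to\infty}B/k=0$, then $\limsup_{k\to\infty}\mathrm{PGS}_m=0$.
   Context: A budget allocation algorithm allocates a total of $B$ observations to the $k$ alternatives one at a time (each observation of alternative $i$ is a noisy evaluation with mean $\mu_i$), and when the budget is exhausted outputs a subset $\mathcal{S}$ of $m$ alternatives; $\mathrm{PGS}_m=\Pr\{\mathcal{S}\subseteq\mathcal{G}\}$. Property 1: letting $\mathcal{A}_t$ be the set of alternatives with no observations when the $t$-th observation is allocated, if the algorithm allocates the $t$-th observation to an alternative in $\mathcal{A}_t$, then every alternative in $\mathcal{A}_t$ is selected with equal probability. Property 2: letting $\mathcal{A}$ be the set of alternatives with no observations when the budget is exhausted, if $|\mathcal{A}|\ge m$ and the algorithm chooses its $m$ output alternatives from $\mathcal{A}$, then every $m$-element subset of $\mathcal{A}$ is selected with equal probability. *)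

From HB Require Import structures.
From mathcomp Require Import all_boot all_order all_algebra.
From mathcomp Require Import all_classical all_reals all_analysis.
Set Implicit Arguments. Unset Strict Implicit. Unset Printing Implicit Defensive.
Import Order.TTheory GRing.Theory Num.Theory.
Local Open Scope ring_scope.

(* Good set G = {i : mu_i >= mu_m - delta}, where alternatives are 0-indexed,
   so mu_m (1-based) is mu at index m-1. (Empty when k < m.) *)
Definition goodset (R : realType) (k : nat) (mu : 'I_k -> R) (m : nat) (delta : R)
  : {set 'I_k} :=
  [set i : 'I_k | [exists j : 'I_k, (nat_of_ord j == m.-1) && (mu j - delta <= mu i)]].

(* Set of alternatives with no observations when the (t+1)-th observation
   (0-based index t) is allocated: those not chosen by X 0, ..., X (t-1). *)
Definition unobserved (T : Type) (k : nat) (X : nat -> T -> 'I_k) (t : nat) (w : T)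
  : {set 'I_k} :=
  [set i : 'I_k | [forall s : 'I_t, X s w != i]].

(* Write U_t for the alternatives not yet observed when the t-th observation is
   allocated, and let G be the good set, with |G| <= g.  If the output S lies in
   G, then either some i in G is observed for the first time at a step t < B, or
   S is contained in U_B.  Property 1 makes every unobserved alternative equally
   likely to be picked at step t; as at least k - t are unobserved and only one
   is picked, i is first observed at t with probability at most 1/(k - t).
   Property 2, applied to the sets obtained from S by swapping one element for
   an unobserved alternative outside S, likewise bounds the probability that
   the output is a given fresh set by 1/(k - B - m).  A union bound over the gB
   pairs (i, t) and the 2^g subsets of G gives (k - B - m) PGS <= gB + 2^g,
   which forces PGS -> 0 when B = o(k). *)

From HB Require Import structures.
From mathcomp Require Import all_boot all_order all_algebra.
From mathcomp Require Import all_classical all_reals all_analysis.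
From mathcomp Require Import measurable_realfun zify.
Import Order.TTheory GRing.Theory Num.Theory.
Local Open Scope classical_set_scope.
Local Open Scope ring_scope.

Definition hits {T : Type} {J : finType} (A : J -> set T) (w : T) : nat :=
  #|[set j | `[< A j w >]]%SET|.

Section hits_probability.
Context {d : measure_display} {T : measurableType d} {R : realType} {J : finType}.
Variable P : probability T R.
Local Open Scope ereal_scope.

Lemma sum_indic_hits (A : J -> set T) w : (\sum_j \1_(A j) w)%R = (hits A w)%:R :> R.
Proof.
rewrite /hits -sum1_card natr_sum [RHS]big_mkcond /=; apply: eq_bigr => j _.
by rewrite indicE inE; case: asboolP => Ajw; [rewrite mem_set | rewrite memNset].
Qed.

Lemma measurable_fun_hits (A : J -> set T) : (forall j, measurable (A j)) ->
  measurable_fun setT (fun w => ((hits A w)%:R : R)%:E).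
Proof.
move=> mA; under eq_fun do rewrite -sum_indic_hits.
by apply/measurable_EFinP; apply: measurable_sum => j; exact: measurable_indic.
Qed.

Lemma sum_probability_hits (A : J -> set T) : (forall j, measurable (A j)) ->
  \sum_j P (A j) = \int[P]_w ((hits A w)%:R : R)%:E.
Proof.
move=> mA; under eq_bigr do rewrite -[A _]setIT -integral_indic //.
rewrite -ge0_integral_sum //; last first.
  by move=> j; apply/measurable_EFinP; exact: measurable_indic.
by apply: eq_integral => w _; rewrite sumEFin sum_indic_hits.
Qed.

Lemma le_hits_sum_probability (A : J -> set T) (C : set T) (c : nat) :
  (forall j, measurable (A j)) -> measurable C ->
  (forall w, C w -> (c <= hits A w)%N) ->
  c%:R%:E * P C <= \sum_j P (A j).
Proof.
move=> mA mC hitsC; rewrite sum_probability_hits // -[C in P C]setIT -integral_indic //.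
rewrite -(@integralZl_indic _ _ _ _ _ measurableT (fun _ => C)) //; last by rewrite ltrn0.
apply: ge0_le_integral => //; last 2 first.
- exact: measurable_fun_hits.
- move=> w _; rewrite lee_fin indicE; have [/set_mem Cw|_] := boolP (w \in C).
    by rewrite mulr1 ler_nat hitsC.
  by rewrite mulr0.
by apply/measurable_EFinP; apply: measurable_funM => //; exact: measurable_indic.
Qed.

Lemma sum_probability_le1 (A : J -> set T) : (forall j, measurable (A j)) ->
  (forall w, (hits A w <= 1)%N) -> \sum_j P (A j) <= 1.
Proof.
move=> mA hits_le1; rewrite sum_probability_hits //.
apply: le_trans (probability_le1 P measurableT); rewrite -[P setT]mul1e -integral_cst //.
apply: ge0_le_integral => //; first exact: measurable_fun_hits.
by move=> w _; rewrite lee_fin (ler_nat _ _ 1).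
Qed.

Lemma exchange_hits_bound (A A' : J -> set T) (C : set T) (c : nat) :
  (forall j, measurable (A j)) -> (forall j, measurable (A' j)) -> measurable C ->
  (forall j, P (A j) = P (A' j)) ->
  (forall w, C w -> (c <= hits A w)%N) -> (forall w, (hits A' w <= 1)%N) ->
  c%:R%:E * P C <= 1.
Proof.
move=> mA mA' mC AA' hitsC hitsA'.
apply: le_trans (le_hits_sum_probability _ _ _ mA mC hitsC) _.
rewrite (eq_bigr _ (fun j _ => AA' j)); exact: sum_probability_le1.
Qed.

End hits_probability.

Section finite_valued.
Context {d : measure_display} {T : measurableType d}.

Lemma measurable_fin_forall {I : finType} (F : I -> set T) :
  (forall i, measurable (F i)) -> measurable [set w | forall i, F i w].
Proof.
move=> mF; rewrite (_ : [set w | _] = \bigcap_(i in [set: I]) F i).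
  by apply: fin_bigcap_measurable => //; exact: finite_finset.
by apply/seteqP; split => w /= Fw i //; exact: Fw.
Qed.

Lemma measurable_fin_preimage {J : finType} (f : T -> J) :
  (forall y, measurable [set w | f w = y]) -> forall A : set J, measurable (f @^-1` A).
Proof.
move=> mf A; rewrite (_ : f @^-1` A = \bigcup_(y in A) [set w | f w = y]).
  by apply: fin_bigcup_measurable => //; exact: finite_finset.
apply/seteqP; split => [w Afw|w [y Ay /= fwy]]; first by exists (f w).
by rewrite /preimage /= fwy.
Qed.

Variables (k : nat) (X : nat -> T -> 'I_k).
Hypothesis mX : forall t i, measurable [set w | X t w = i].

Lemma measurable_mem_unobserved t i : measurable [set w | i \in unobserved X t w].
Proof.
rewrite (_ : [set w | _] = [set w | forall s : 'I_t, X s w != i]).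
  apply: measurable_fin_forall => s.
  exact: (measurable_fin_preimage _ (mX s) [set j | j != i]).
by apply/seteqP; split => w /=; rewrite inE => /forallP.
Qed.

Lemma measurable_sub_unobserved t (A : {set 'I_k}) :
  measurable [set w | A \subset unobserved X t w].
Proof.
rewrite (_ : [set w | _] = [set w | forall i : {i | i \in A}, val i \in unobserved X t w]).
  by apply: measurable_fin_forall => i; exact: measurable_mem_unobserved.
apply/seteqP; split => w /=; first by move/fintype.subsetP => AU [i /= /AU].
by move=> AU; apply/fintype.subsetP => i iA; exact: (AU (exist _ i iA)).
Qed.

End finite_valued.

Lemma card_unobserved_ge {T : Type} {k : nat} (X : nat -> T -> 'I_k) t w :
  (k - t <= #|unobserved X t w|)%N.
Proof.
rewrite (_ : unobserved X t w = ~: [set X s w | s : 'I_t]).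
  rewrite cardsCs finset.setCK card_ord leq_sub2l //.
  by rewrite (leq_trans (leq_imset_card _ _)) // card_ord.
apply/setP => i; rewrite !inE; apply/forallP/negP => [Xi /imsetP[s _ Xs]|Xi s].
  by move: (Xi s); rewrite Xs eqxx.
by apply/eqP => Xs; apply: Xi; apply/imsetP; exists s.
Qed.

Lemma first_observation {T : Type} {k : nat} {X : nat -> T -> 'I_k} {n w i} :
  i \notin unobserved X n w -> exists t : 'I_n, i \in unobserved X t w /\ X t w = i.
Proof.
rewrite inE negb_forall => /existsP[s]; rewrite negbK => Xs.
have observed : exists t, ((t < n)%N && (X t w == i)) by exists s; rewrite ltn_ord.
have [t /andP[tn /eqP Xt] t_min] := ex_minnP observed.
exists (Ordinal tn); split => //; rewrite inE; apply/forallP => r; apply/negP => /eqP Xr.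
have := t_min r; rewrite (ltn_trans (ltn_ord r) tn) Xr eqxx => /(_ isT).
by rewrite leqNgt ltn_ord.
Qed.

Lemma sum_nat_of_bool (I : finType) (p : pred I) :
  (\sum_i (p i : nat))%N = #|[set i | p i]%SET|.
Proof. by rewrite -sum1dep_card [RHS]big_mkcond. Qed.

Section budget_bound.
Context {d : measure_display} {T : measurableType d} {R : realType}.
Variable P : probability T R.
Context {k m n : nat} {X : nat -> T -> 'I_k} {S : T -> {set 'I_k}}.
Hypothesis mX : forall t i, measurable [set w | X t w = i].
Hypothesis mS : forall A, measurable [set w | S w = A].
Hypothesis m_gt0 : (0 < m)%N.
Hypothesis card_S : forall w, #|S w| = m.
Hypothesis pick_exchangeable : forall t, (t < n)%N -> forall i j : 'I_k,
  P [set w | i \in unobserved X t w /\ j \in unobserved X t w /\ X t w = i]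
  = P [set w | i \in unobserved X t w /\ j \in unobserved X t w /\ X t w = j].
Hypothesis output_exchangeable : forall S1 S2 : {set 'I_k}, #|S1| = m -> #|S2| = m ->
  P [set w | S1 \subset unobserved X n w /\ S2 \subset unobserved X n w /\ S w = S1]
  = P [set w | S1 \subset unobserved X n w /\ S2 \subset unobserved X n w /\ S w = S2].

Definition first_obs t (i : 'I_k) : set T :=
  [set w | i \in unobserved X t w] `&` [set w | X t w = i].

Definition fresh_output (A : {set 'I_k}) : set T :=
  [set w | A \subset unobserved X n w] `&` [set w | S w = A].

Lemma measurable_first_obs t i : measurable (first_obs t i).
Proof. by apply: measurableI; [exact: measurable_mem_unobserved|exact: mX]. Qed.

Lemma measurable_fresh_output A : measurable (fresh_output A).
Proof. by apply: measurableI; [exact: measurable_sub_unobserved|exact: mS]. Qed.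

Lemma measurable_pick_event t i j l :
  measurable [set w | i \in unobserved X t w /\ j \in unobserved X t w /\ X t w = l].
Proof.
apply: measurableI; first exact: measurable_mem_unobserved.
by apply: measurableI; [exact: measurable_mem_unobserved|exact: mX].
Qed.

Lemma measurable_output_event (S1 S2 A : {set 'I_k}) :
  measurable
    [set w | S1 \subset unobserved X n w /\ S2 \subset unobserved X n w /\ S w = A].
Proof.
apply: measurableI; first exact: measurable_sub_unobserved.
by apply: measurableI; [exact: measurable_sub_unobserved|exact: mS].
Qed.

Local Open Scope ereal_scope.

Lemma first_obs_bound t i : (t < n)%N -> (k - t)%:R%:E * P (first_obs t i) <= 1.
Proof.
move=> tn; apply: (exchange_hits_bound P
  (fun j => [set w | i \in unobserved X t w /\ j \in unobserved X t w /\ X t w = i])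
  (fun j => [set w | i \in unobserved X t w /\ j \in unobserved X t w /\ X t w = j])).
- by move=> j; exact: measurable_pick_event.
- by move=> j; exact: measurable_pick_event.
- exact: measurable_first_obs.
- exact: pick_exchangeable.
- move=> w [iU Xi]; apply: leq_trans (card_unobserved_ge X t w) (subset_leq_card _).
  by apply/fintype.subsetP => j jU; rewrite inE; apply/asboolP.
- move=> w; rewrite -(cards1 (X t w)); apply: subset_leq_card.
  by apply/fintype.subsetP => j; rewrite !inE => -[_ [_ ->]].
Qed.

Lemma fresh_output_bound S1 : (k - n - m)%:R%:E * P (fresh_output S1) <= 1.
Proof.
have [cardS1|cardS1] := eqVneq #|S1| m; last first.
  rewrite (_ : fresh_output S1 = set0) ?measure0 ?mule0 //.
  by apply/seteqP; split => w // [_ /= SwS1]; move: cardS1; rewrite -SwS1 card_S eqxx.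
have [a aS1] : exists a, a \in S1 by apply/card_gt0P; rewrite cardS1.
pose swap b := b |: (S1 :\ a).
have card_swap b : b \notin S1 -> #|swap b| = m.
  move=> bS1; rewrite cardsU1 (cardsD1 a S1) aS1 in cardS1 *.
  by rewrite !inE negb_and bS1 orbT -cardS1.
pose E b A := if b \in S1 then set0
  else [set w | S1 \subset unobserved X n w /\ swap b \subset unobserved X n w /\ S w = A].
have mE b A : measurable (E b A).
  by rewrite /E; case: ifP => _; [exact: measurable0|exact: measurable_output_event].
apply: (exchange_hits_bound P (fun b => E b S1) (fun b => E b (swap b))) => //.
- exact: measurable_fresh_output.
- move=> b; rewrite /E; case: ifPn => // bS1.
  exact: output_exchangeable (card_swap b bS1).
- move=> w [/= S1U SwS1]; apply: (@leq_trans (#|unobserved X n w| - #|S1|)).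
    by rewrite cardS1 leq_sub2r // card_unobserved_ge.
  apply: (@leq_trans #|unobserved X n w :\: S1|).
    by rewrite cardsD leq_sub2l // subset_leq_card // subsetIr.
  apply: subset_leq_card; apply/fintype.subsetP => b.
  rewrite finset.in_setD => /andP[bS1 bU].
  rewrite inE /E (negbTE bS1); apply/asboolP; split => //; split => //.
  rewrite /swap finset.subUset finset.sub1set bU.
  exact: fintype.subset_trans (finset.subsetDl _ _) S1U.
- move=> w; apply/card_le1_eqP => b b'; rewrite !inE /E.
  case: ifPn => [_ []|bS1 [_ [_ Swb]]]; case: ifPn => [_ []|b'S1 [_ [_ Swb']]].
  have : b' \in swap b by rewrite -Swb Swb' setU11.
  by rewrite !inE => /orP[/eqP //|/andP[_ b'S1']]; rewrite b'S1' in b'S1.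
Qed.

Lemma subset_first_obs_or_fresh (G : {set 'I_k}) w : S w \subset G ->
  (exists (i : 'I_k) (t : 'I_n), i \in G /\ first_obs t i w) \/ fresh_output (S w) w.
Proof.
move=> SG; have [SU|/subsetPn[i iS iU]] := boolP (S w \subset unobserved X n w).
  by right.
have [t obs_t] := first_observation iU.
by left; exists i, t; split => //; exact: (fintype.subsetP SG).
Qed.

Lemma pgs_budget_bound (G : {set 'I_k}) (g : nat) : (#|G| <= g)%N ->
  (k - n - m)%:R%:E * P [set w | S w \subset G] <= (g * n + 2 ^ g)%:R%:E.
Proof.
move=> card_G.
pose relevant (j : 'I_k * 'I_n + {set 'I_k}) :=
  match j with inl p => p.1 \in G | inr A => A \subset G end.
pose E j := if relevant j then
  match j with inl p => first_obs p.2 p.1 | inr A => fresh_output A end else set0.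
have mE j : measurable (E j).
  rewrite /E; case: ifP => _; last exact: measurable0.
  by case: j => [[i t]|A]; [exact: measurable_first_obs|exact: measurable_fresh_output].
have mSG : measurable [set w | S w \subset G].
  exact: (measurable_fin_preimage _ mS [set A | A \subset G]).
have cover : P [set w | S w \subset G] <= \sum_j P (E j).
  rewrite -[P _]mul1e; apply: (le_hits_sum_probability P E _ 1) => // w SG.
  apply/card_gt0P; case: (subset_first_obs_or_fresh G w SG) => [[i [t [iG obs]]]|fresh].
    by exists (inl (i, t)); rewrite inE /E /= iG; apply/asboolP.
  by exists (inr (S w)); rewrite inE /E /= SG; apply/asboolP.
have term_bound j : (k - n - m)%:R%:E * P (E j) <= (relevant j : nat)%:R%:E.
  rewrite /E; case: ifP => _; last by rewrite measure0 mule0.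
  case: j => [[i t]|A] /=; last exact: fresh_output_bound.
  apply: le_trans (first_obs_bound t i (ltn_ord t)); apply: lee_wpmul2r => //.
  by rewrite lee_fin ler_nat (leq_trans (leq_subr _ _)) // leq_sub2l // ltnW.
have factor_ge0 : 0 <= (k - n - m)%:R%:E :> \bar R by rewrite lee_fin.
apply: (le_trans (lee_wpmul2l factor_ge0 cover)).
rewrite ge0_sume_distrr //; apply: le_trans (lee_sum _ (fun j _ => term_bound j)) _.
rewrite sumEFin lee_fin -natr_sum ler_nat big_sumType /= !sum_nat_of_bool.
rewrite (_ : [set p | p.1 \in G]%SET = finset.setX G [set: 'I_n]%SET); last first.
  by apply/setP => -[i t]; rewrite !inE andbT.
rewrite cardsX cardsT card_ord -[[set A : {set _} | A \subset G]%SET]/(powerset G).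
rewrite card_powerset.
by rewrite leq_add ?leq_pexp2l // leq_mul2r card_G orbT.
Qed.

End budget_bound.

Lemma limn_esup_nat_bounded {R : realType} {u : nat -> nat} :
  (limn_esup (fun n => ((u n)%:R : R)%:E) < +oo)%E ->
  exists g, \forall n \near \oo, (u n <= g)%N.
Proof.
move=> /ereal_inf_lt[_ [V Voo <-]]; set s := ereal_sup _ => s_lt.
exists (Num.bound (fine s)); apply: filterS Voo => n Vn.
have un_le_s : (((u n)%:R : R)%:E <= s)%E by apply: ereal_sup_ubound; exists n.
have s_ge0 : (0 <= s)%E by rewrite (le_trans _ un_le_s) // lee_fin.
have s_fin : s \is a fin_num by rewrite ge0_fin_numE.
move: un_le_s; rewrite -(fineK s_fin) lee_fin => un_le_s.
apply: ltnW; rewrite -(ltr_nat R); apply: le_lt_trans un_le_s (archi_boundP _).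
by rewrite fine_ge0.
Qed.

Lemma negligible_budget {R : realType} {b : nat -> nat} (m : nat) :
  (fun k => (b k)%:R / k%:R : R) @ \oo --> 0 ->
  \forall k \near \oo, (2 * (b k + m) <= k)%N.
Proof.
have quarter_gt0 : 0 < 4^-1 :> R by rewrite invr_gt0.
move=> /cvgrPdist_lt /(_ _ quarter_gt0) b_small; near=> k.
have k_ge : (4 * m.+1 <= k)%N by near: k; exact: nbhs_infty_ge.
have : `|0 - (b k)%:R / k%:R| < 4^-1 :> R by near: k.
rewrite sub0r normrN ger0_norm ?divr_ge0 // ltr_pdivrMr ?ltr0n; last by lia.
have -> : 4^-1 * k%:R = (k%:R / 4 : R) by rewrite mulrC.
rewrite ltr_pdivlMr // -natrM ltr_nat; lia.
Unshelve. all: by end_near.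
Qed.

Lemma cvg_inv_nat (R : realType) : (fun k => k%:R^-1 : R) @ \oo --> 0.
Proof. by rewrite -(@cvg_shiftS _ (fun k => k%:R^-1 : R^o)); exact: cvg_harmonic. Qed.

Lemma cvg_budget_ratio {R : realType} (b : nat -> nat) (g c : nat) :
  (fun k => (b k)%:R / k%:R : R) @ \oo --> 0 ->
  (fun k => (2 * (g * b k + c))%:R / k%:R : R) @ \oo --> 0.
Proof.
move=> b_ratio; have -> : (fun k => (2 * (g * b k + c))%:R / k%:R : R)
    = (fun k => (2 * g)%:R * ((b k)%:R / k%:R) + (2 * c)%:R * k%:R^-1).
  by apply/funext => k; rewrite !natrM natrD !natrM mulrDr mulrDl !mulrA.
rewrite -[0 : R](addr0 0) -[X in X + _](mulr0 (2 * g)%:R) -[X in _ + X](mulr0 (2 * c)%:R).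
by apply: cvgD; apply: cvgMl_tmp => //; exact: cvg_inv_nat.
Qed.

Lemma le_div_of_budget {R : realType} {k b m c : nat} {p : \bar R} :
  (0 < k)%N -> (2 * (b + m) <= k)%N -> (0 <= p)%E ->
  ((k - b - m)%:R%:E * p <= c%:R%:E)%E -> (p <= ((2 * c)%:R / k%:R)%:E)%E.
Proof.
move=> k_gt0 small p_ge0 bound; rewrite mulrC EFinM lee_pdivlMl ?ltr0n //.
rewrite natrM EFinM; apply: le_trans (lee_wpmul2l _ bound); last by rewrite lee_fin.
by rewrite muleA -EFinM lee_wpmul2r // lee_fin -natrM ler_nat; lia.
Qed.

Theorem mainTheorem6
  (R : realType) (m : nat) (delta : R)
  (d : nat -> measure_display) (T : forall k, measurableType (d k))
  (P : forall k, probability (T k) R)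
  (mu : forall k, 'I_k -> R)
  (B : nat -> nat)
  (X : forall k, nat -> T k -> 'I_k)
  (S : forall k, T k -> {set 'I_k})
  (F : forall k, nat -> set_system (T k)) :
  (0 < m)%N ->
  0 < delta ->
  (* alternatives labeled so that mu_1 >= ... >= mu_k *)
  (forall k (i j : 'I_k), (i <= j)%N -> mu k j <= mu k i) ->
  (* limsup_k |G_k| < oo *)
  (limn_esup (fun k => ((#|goodset (mu k) m delta|)%:R : R)%:E) < +oo)%E ->
  (* B_k / k -> 0 *)
  ((fun k : nat => (B k)%:R / k%:R : R) @ \oo --> 0%R) ->
  (* measurability of the allocations and of the output *)
  (forall k t (i : 'I_k), measurable [set w | X k t w = i]) ->
  (forall k (A : {set 'I_k}), measurable [set w | S k w = A]) ->
  (* the output is a subset of m alternatives *)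
  (forall k w, (m <= k)%N -> #|S k w| = m) ->
  (* F k t : the history (information) available when the (t+1)-th
     observation is allocated; F k (B k) : history when budget is exhausted *)
  (forall k t, sigma_algebra setT (F k t)) ->
  (forall k t, F k t `<=` measurable) ->
  (forall k t u, (t <= u)%N -> F k t `<=` F k u) ->
  (forall k s t (i : 'I_k), (s < t)%N -> F k t [set w | X k s w = i]) ->
  (* Property 1 *)
  (forall k t, (m <= k)%N -> (t < B k)%N ->
     forall H, F k t H -> forall i j : 'I_k,
       P k (H `&` [set w | i \in unobserved (X k) t w /\ j \in unobserved (X k) t w
                           /\ X k t w = i])
     = P k (H `&` [set w | i \in unobserved (X k) t w /\ j \in unobserved (X k) t w
                           /\ X k t w = j])) ->
  (* Property 2 *)
  (forall k, (m <= k)%N ->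
     forall H, F k (B k) H -> forall S1 S2 : {set 'I_k},
       #|S1| = m -> #|S2| = m ->
       P k (H `&` [set w | S1 \subset unobserved (X k) (B k) w
                           /\ S2 \subset unobserved (X k) (B k) w /\ S k w = S1])
     = P k (H `&` [set w | S1 \subset unobserved (X k) (B k) w
                           /\ S2 \subset unobserved (X k) (B k) w /\ S k w = S2])) ->
  (* limsup_k PGS_m = 0 *)
  limn_esup (fun k => P k [set w | S k w \subset goodset (mu k) m delta]) = 0%E.
Proof.
move=> m_gt0 _ _ good_bounded budget_ratio mX mS card_S F_sigma _ _ _ prop1 prop2.
have [g good_le_g] := limn_esup_nat_bounded good_bounded.
have FT k t : F k t setT.
  by have [F0 FD _] := F_sigma k t; rewrite -(setD0 setT); exact: FD.
apply: (cvg_limn_einf_sup _).2.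
apply: (squeeze_cvge (f := cst 0%E)
  (h := fun k => ((2 * (g * B k + 2 ^ g))%:R / k%:R)%:E)); last 2 first.
- exact: cvg_cst.
- by apply: cvg_EFin; [exact: nearW|exact: cvg_budget_ratio].
near=> k; apply/andP; split; first exact: measure_ge0.
have small : (2 * (B k + m) <= k)%N by near: k; exact: negligible_budget m budget_ratio.
have k_ge_m : (m <= k)%N by lia.
have k_gt0 : (0 < k)%N by lia.
apply: (le_div_of_budget k_gt0 small (measure_ge0 _ _)).
apply: (pgs_budget_bound (P k) (mX k) (mS k) m_gt0 (fun w => card_S k w k_ge_m)).
- by move=> t tB i j; have := prop1 k t k_ge_m tB _ (FT k t) i j; rewrite !setTI.
- by move=> S1 S2 c1 c2; have := prop2 k k_ge_m _ (FT k (B k)) S1 S2 c1 c2; rewrite !setTI.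
- by near: k; exact: good_le_g.
Unshelve. all: by end_near.
Qed.
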